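(* Let $d\ge1$, let $\pi_1,\dots,\pi_n>0$ with $\sum_i\pi_i=1$, and let $b_1,\dots,b_N$ be a basis of $V_d=\{p\in\mathbb{R}[x]_d:p(\mathbf1)=0\}$. Then there exists a positive definite $N\times N$ matrix $A$ such that $$\Big(\sum_{d'=0}^{d-1}\|x\|_\pi^{2d'}\Big)\,\|x-\mathbf1\|_\pi^2=b(x)^\top A\,b(x),\qquad b(x)=(b_1(x),\dots,b_N(x))^\top.$$
   Context: $\|x\|_\pi^2=\sum_i\pi_ix_i^2$; $\mathbf 1=(1,\dots,1)\in\mathbb{R}^n$; $\mathbb{R}[x]_k$ denotes real polynomials in $x=(x_1,\dots,x_n)$ of degree at most $k$. *)

From HB Require Import structures.
From mathcomp Require Import all_boot all_order all_algebra.
From mathcomp Require Import reals.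
From mathcomp Require Import mpoly.
Set Implicit Arguments. Unset Strict Implicit. Unset Printing Implicit Defensive.
Import Order.TTheory GRing.Theory Num.Theory.
Local Open Scope ring_scope.

Definition sqnorm_pi (R : realType) (n : nat) (pi x : 'I_n -> R) : R :=
  \sum_(i < n) pi i * x i ^+ 2.

(* membership in V_d = { p in R[x]_d : p(1) = 0 }  (msize p = 1 + deg p) *)
Definition in_Vd (R : realType) (n d : nat) (p : {mpoly R[n]}) : Prop :=
  (msize p <= d.+1)%N /\ p.@[fun _ => 1] = 0.

Definition is_basis_Vd (R : realType) (n d N : nat) (b : 'I_N -> {mpoly R[n]}) : Prop :=
  [/\ (forall i, in_Vd d (b i)),
      (forall c : 'I_N -> R, \sum_(i < N) c i *: b i = 0 -> forall i, c i = 0)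
    & (forall p, in_Vd d p -> exists c : 'I_N -> R, p = \sum_(i < N) c i *: b i)].

Definition posdef (R : realType) (N : nat) (A : 'M[R]_N) : Prop :=
  A^T = A /\ forall v : 'rV[R]_N, v != 0 -> 0 < (v *m A *m v^T) 0 0.

Definition bvec (R : realType) (n N : nat) (b : 'I_N -> {mpoly R[n]}) (x : 'I_n -> R)
  : 'rV[R]_N := \row_(i < N) (b i).@[x].

From HB Require Import structures.
From mathcomp Require Import all_boot all_order all_algebra.
From mathcomp Require Import reals boolp.
From mathcomp Require Import mpoly.
From mathcomp Require Import ring.
Set Implicit Arguments. Unset Strict Implicit. Unset Printing Implicit Defensive.
Import Order.TTheory GRing.Theory Num.Theory.
Local Open Scope ring_scope.

(* Let W(x) = sum_(k<d) ||x||_pi^(2k) * ||x - 1||_pi^2.  Expanding the products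
   ||x||_pi^(2k) ||x - 1||_pi^2 = sum pi_(j1)..pi_(jk) pi_i (x_(j1)..x_(jk) (x_i - 1))^2
   writes W as a positively weighted sum of squares  sum_g w_g g(x)^2  over a
   finite family of polynomials g = X^beta (X_i - 1) with |beta| < d, each of
   which lies in V_d.  Writing each g in the basis b, g = c_g . b, the Gram
   matrix  A = sum_g w_g c_g^T c_g  satisfies W(x) = b(x) A b(x)^T.  It is
   positive semidefinite, and definite because the family spans V_d: the
   polynomials X^beta - 1 (|beta| <= d) telescope into the X^beta (X_i - 1),
   and every p in V_d is a combination of them since p(1) = 0.  Hence a vector
   v with v A v^T = 0 annihilates the coordinates of all of V_d, in particular
   those of every basis vector b_j, which forces v = 0.
   The file develops: Gram matrices of weighted row vectors; the family of
   weighted generators and its sum of squares; the spanning property of V_d;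
   coordinates in the basis b; and finally the theorem. *)

Section Gram.
Variables (R : comNzRingType) (N : nat).

Definition gram (rs : seq (R * 'rV[R]_N)) : 'M[R]_N :=
  \sum_(w <- rs) w.1 *: (w.2^T *m w.2).

Lemma gram_tr rs : (gram rs)^T = gram rs.
Proof.
rewrite /gram raddf_sum /=; apply: eq_bigr => w _.
by rewrite linearZ /= trmx_mul trmxK.
Qed.

Lemma gram_form (u : 'rV[R]_N) rs :
  (u *m gram rs *m u^T) 0 0 = \sum_(w <- rs) w.1 * ((u *m w.2^T) 0 0) ^+ 2.
Proof.
rewrite /gram mulmx_sumr mulmx_suml summxE; apply: eq_bigr => w _.
rewrite -scalemxAr -scalemxAl mxE; congr (_ * _).
rewrite mulmxA -(mulmxA (u *m w.2^T)) mxE big_ord1 expr2; congr (_ * _).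
by rewrite -{1}(trmxK w.2) -trmx_mul mxE.
Qed.
End Gram.

Lemma gram_posdef (R : realType) (N : nat) (rs : seq (R * 'rV[R]_N)) :
  (forall w, w \in rs -> 0 < w.1) ->
  (forall v : 'rV[R]_N, (forall w, w \in rs -> (v *m w.2^T) 0 0 = 0) -> v = 0) ->
  posdef (gram rs).
Proof.
move=> w_gt0 full; split; first exact: gram_tr.
move=> v nz_v; rewrite gram_form big_seq.
have term_ge0 w : w \in rs -> 0 <= w.1 * ((v *m w.2^T) 0 0) ^+ 2.
  by move=> /w_gt0 /ltW w_ge0; rewrite mulr_ge0 ?sqr_ge0.
rewrite lt_def sumr_ge0 // andbT; apply: contra nz_v.
rewrite psumr_eq0 // => /allP all0; apply/eqP/full => w w_rs.
move/implyP: (all0 w w_rs) => /(_ w_rs).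
by rewrite mulf_eq0 gt_eqF ?w_gt0 //= sqrf_eq0 => /eqP.
Qed.

Lemma mdegS_split (n k : nat) (m : 'X_{1..n}) : mdeg m = k.+1 ->
  exists j (m' : 'X_{1..n}), m = (m' + U_(j))%MM /\ mdeg m' = k.
Proof.
move=> deg_m; case: (pickP (fun j => m j != 0%N)) => [j mj_nz|m_0]; last first.
  suff m0 : m = 0%MM by move: deg_m; rewrite m0 mdeg0.
  by apply/mnmP => j; rewrite mnm0E; apply/eqP/negbFE/m_0.
exists j, (m - U_(j))%MM; have m_eq : m = (m - U_(j) + U_(j))%MM.
  by rewrite submK // lep1mP.
by split => //; move: deg_m; rewrite {1}m_eq mdegD mdeg1 addn1 => -[].
Qed.

Section WeightedSquares.
Variables (R : realType) (n : nat) (pi : 'I_n -> R).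

Definition wsos (gs : seq (R * {mpoly R[n]})) (x : 'I_n -> R) : R :=
  \sum_(w <- gs) w.1 * (w.2).@[x] ^+ 2.

(* gen k lists the pairs (pi_(j1)..pi_(jk) pi_i, X_(j1)..X_(jk) (X_i - 1)), i.e.
   the terms of the expansion of ||x||_pi^(2k) ||x - 1||_pi^2; gens d collects
   them for all k < d. *)
Fixpoint gen (k : nat) : seq (R * {mpoly R[n]}) :=
  if k is k'.+1 then [seq (pi j * w.1, 'X_j * w.2) | j <- enum 'I_n, w <- gen k']
  else [seq (pi i, 'X_i - 1) | i <- enum 'I_n].

Definition gens (d : nat) : seq (R * {mpoly R[n]}) :=
  [seq w | k <- iota 0 d, w <- gen k].

Lemma wsos_gen k x :
  wsos (gen k) x = sqnorm_pi pi x ^+ k * sqnorm_pi pi (fun i => x i - 1).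
Proof.
elim: k => [|k IHk] /=.
  rewrite expr0 mul1r /wsos big_map /sqnorm_pi big_enum /=.
  by apply: eq_bigr => i _; rewrite mevalB mevalXU meval1.
rewrite /wsos big_allpairs_dep /= exprS -mulrA -IHk /wsos /sqnorm_pi big_enum /=.
rewrite big_distrl /=; apply: eq_bigr => j _; rewrite big_distrr /=.
by apply: eq_bigr => w _; rewrite mevalM mevalXU; ring.
Qed.

Lemma wsos_gens d x : wsos (gens d) x =
  (\sum_(k < d) sqnorm_pi pi x ^+ k) * sqnorm_pi pi (fun i => x i - 1).
Proof.
rewrite /wsos big_allpairs_dep /= -(big_mkord xpredT) /index_iota subn0.
by rewrite big_distrl; apply: eq_bigr => k _; exact: wsos_gen.
Qed.

Lemma gens_weight_gt0 d w : (forall i, 0 < pi i) -> w \in gens d -> 0 < w.1.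
Proof.
move=> pi_gt0 /allpairsPdep[k [{}w [_ w_gen ->]]]; elim: k w w_gen => [|k IHk] w /=.
  by case/mapP => i _ ->; apply: pi_gt0.
by case/allpairsPdep => j [w' [_ w'_gen ->]]; rewrite mulr_gt0 ?IHk.
Qed.

Lemma gen_in_Vd k w : w \in gen k -> in_Vd k.+1 w.2.
Proof.
elim: k w => [|k IHk] w /=.
  case/mapP => i _ -> /=; split; last by rewrite mevalB mevalXU meval1 subrr.
  rewrite (leq_trans (msizeD_le _ _)) // msizeN msizeX mdeg1 msize1.
  by rewrite geq_max.
case/allpairsPdep => j [w' [_ w'_gen ->]] /=.
have [size_w' root_w'] := IHk _ w'_gen; split; last by rewrite mevalM root_w' mulr0.
have [->|w'_nz] := eqVneq w'.2 0; first by rewrite mulr0 msize0.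
rewrite msizeM ?msizeX ?mdeg1 //.
by apply/eqP => /(congr1 (fun p : {mpoly R[n]} => msize p)); rewrite msizeX msize0.
Qed.

Lemma gens_in_Vd d w : w \in gens d -> in_Vd d w.2.
Proof.
case/allpairsPdep => k [{}w [k_iota w_gen ->]].
have [size_w root_w] := gen_in_Vd w_gen; split => //.
by move: k_iota; rewrite mem_iota add0n => /andP[_ k_iota]; rewrite (leq_trans size_w).
Qed.

Lemma gen_complete k (m : 'X_{1..n}) i : mdeg m = k ->
  exists2 w, w \in gen k & w.2 = 'X_[m] * ('X_i - 1).
Proof.
elim: k m => [|k IHk] m deg_m /=.
  move/eqP: deg_m; rewrite mdeg_eq0 => /eqP ->.
  by exists (pi i, 'X_i - 1); rewrite ?mpolyX0 ?mul1r // map_f ?mem_enum.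
have [j [m' [-> deg_m']]] := mdegS_split deg_m.
have [w w_gen w_eq] := IHk _ deg_m'.
exists (pi j * w.1, 'X_j * w.2); last by rewrite /= w_eq mpolyXD; ring.
by apply/allpairsPdep; exists j, w; rewrite mem_enum.
Qed.

Lemma gens_complete d (m : 'X_{1..n}) i : (mdeg m < d)%N ->
  'X_[m] * ('X_i - 1) \in [seq w.2 | w <- gens d].
Proof.
move=> deg_m; have [w w_gen w_eq] := gen_complete i (erefl (mdeg m)).
rewrite -w_eq map_f //; apply/allpairsPdep; exists (mdeg m), w.
by rewrite mem_iota.
Qed.
End WeightedSquares.

(* V_d is spanned by the X^beta (X_i - 1) with |beta| < d: any predicate closed
   under linear combinations and true on these polynomials holds on V_d. *)
Section SpanningSet.
Variables (R : realType) (n d : nat) (P : {mpoly R[n]} -> Prop).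
Hypotheses (P0 : P 0) (PD : forall p q, P p -> P q -> P (p + q))
  (PZ : forall c p, P p -> P (c *: p))
  (Pgen : forall (m : 'X_{1..n}) i, (mdeg m < d)%N -> P ('X_[m] * ('X_i - 1))).

(* Telescoping: X^(beta + e_j) - 1 = X^beta (X_j - 1) + (X^beta - 1). *)
Lemma P_Xsub1 (m : 'X_{1..n}) : (mdeg m <= d)%N -> P ('X_[m] - 1).
Proof.
have [k deg_m] : exists k, mdeg m = k by exists (mdeg m).
rewrite deg_m; elim: k m deg_m => [|k IHk] m deg_m le_kd.
  by move/eqP: deg_m; rewrite mdeg_eq0 => /eqP ->; rewrite mpolyX0 subrr.
have [j [m' [-> deg_m']]] := mdegS_split deg_m.
have -> : 'X_[m' + U_(j)] - 1 = 'X_[m'] * ('X_j - 1) + ('X_[m'] - 1) :> {mpoly R[n]}.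
  by rewrite mpolyXD; ring.
by apply: PD; [apply: Pgen | apply: IHk]; rewrite ?deg_m' // ltnW.
Qed.

(* Since p(1) = sum of the coefficients of p = 0,
   p = sum_beta p_beta (X^beta - 1). *)
Lemma P_Vd p : in_Vd d p -> P p.
Proof.
move=> [size_p root_p].
have coeffs_sum0 : \sum_(m <- msupp p) p@_m = 0.
  rewrite -[RHS]root_p mevalE; apply: eq_bigr => m _.
  by rewrite big1 ?mulr1 // => i _; rewrite expr1n.
have -> : p = \sum_(m <- msupp p) p@_m *: ('X_[m] - 1).
  under eq_bigr do rewrite scalerBr.
  by rewrite sumrB -mpolyE -scaler_suml coeffs_sum0 scale0r subr0.
rewrite big_seq; apply: (big_ind P) => // m m_supp; apply/PZ/P_Xsub1.
by rewrite -ltnS (leq_trans (msize_mdeg_lt m_supp)).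
Qed.
End SpanningSet.

Section Coordinates.
Variables (R : realType) (n d N : nat) (b : 'I_N -> {mpoly R[n]}).

Definition comb (c : 'rV[R]_N) : {mpoly R[n]} := \sum_(i < N) c 0 i *: b i.

Lemma comb_meval c x : (comb c).@[x] = (bvec b x *m c^T) 0 0.
Proof.
rewrite /bvec mxE raddf_sum /=; apply: eq_bigr => i _.
by rewrite mevalZ !mxE mulrC.
Qed.

Definition coord (p : {mpoly R[n]}) : 'rV[R]_N :=
  if pselect (exists c, p = comb c) is left spanned then sval (cid spanned) else 0.

Lemma coordK p : (exists c, p = comb c) -> p = comb (coord p).
Proof. by rewrite /coord; case: pselect => // spanned _; case: (cid spanned). Qed.

Hypothesis basis_b : is_basis_Vd d b.

Lemma Vd_coordK p : in_Vd d p -> p = comb (coord p).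
Proof.
case: basis_b => _ _ span_b /span_b [c p_eq]; apply: coordK.
by exists (\row_i c i); rewrite p_eq /comb; apply: eq_bigr => i _; rewrite mxE.
Qed.

Lemma comb_eq_basis j c : comb c = b j -> c = delta_mx 0 j.
Proof.
case: basis_b => _ indep_b _ c_eq; apply/rowP => i; rewrite mxE /=.
apply/eqP; rewrite -subr_eq0; apply/eqP; move: i.
apply: (indep_b (fun i => c 0 i - (i == j)%:R)).
under eq_bigr do rewrite scalerBl.
rewrite sumrB -/(comb c) c_eq (bigD1 j) //= eqxx scale1r big1 ?addr0 ?subrr //.
by move=> i /negbTE ->; rewrite scale0r.
Qed.

(* If v is orthogonal to the coordinates of a family of elements of V_d that
   contains all X^beta (X_i - 1) with |beta| < d, then v is orthogonal to the
   coordinates of all of V_d, hence to every unit vector: v = 0. *)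
Lemma coord_annihilator (gs : seq {mpoly R[n]}) (v : 'rV[R]_N) :
  (forall (m : 'X_{1..n}) i, (mdeg m < d)%N -> 'X_[m] * ('X_i - 1) \in gs) ->
  (forall g, g \in gs -> in_Vd d g) ->
  (forall g, g \in gs -> (v *m (coord g)^T) 0 0 = 0) -> v = 0.
Proof.
move=> gs_gen gs_Vd v_ann.
pose ann p := exists c, p = comb c /\ (v *m c^T) 0 0 = 0.
have ann_Vd p : in_Vd d p -> ann p.
  apply: P_Vd => [|_ _ [cp [-> vcp]] [cq [-> vcq]]|a _ [cp [-> vcp]]|m i deg_m].
  - by exists 0; rewrite trmx0 mulmx0 mxE /comb big1 // => i _; rewrite mxE scale0r.
  - exists (cp + cq); rewrite linearD mulmxDr mxE vcp vcq addr0; split => //.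
    by rewrite /comb -big_split; apply: eq_bigr => i _; rewrite mxE scalerDl.
  - exists (a *: cp); rewrite linearZ -scalemxAr mxE vcp mulr0; split => //.
    by rewrite /comb scaler_sumr; apply: eq_bigr => i _; rewrite mxE scalerA.
  - have g_gs := gs_gen m i deg_m; exists (coord ('X_[m] * ('X_i - 1))).
    by split; [apply/Vd_coordK/gs_Vd | apply: v_ann].
case: basis_b => b_Vd _ _; apply/rowP => j.
have [c [bj_eq vc0]] := ann_Vd _ (b_Vd j).
by rewrite mxE -vc0 (comb_eq_basis (esym bj_eq)) trmx_delta -colE mxE.
Qed.
End Coordinates.

Theorem mainTheorem9 (R : realType) (n d N : nat) (pi : 'I_n -> R)
  (b : 'I_N -> {mpoly R[n]}) :
  (1 <= d)%N ->
  (forall i, 0 < pi i) ->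
  \sum_(i < n) pi i = 1 ->
  is_basis_Vd d b ->
  exists A : 'M[R]_N, posdef A /\
    forall x : 'I_n -> R,
      (\sum_(k < d) sqnorm_pi pi x ^+ k) * sqnorm_pi pi (fun i => x i - 1)
      = (bvec b x *m A *m (bvec b x)^T) 0 0.
Proof.
move=> _ pi_gt0 _ basis_b.
exists (gram [seq (w.1, coord b w.2) | w <- gens pi d]); split.
  apply: gram_posdef => [_ /mapP[w w_gens ->]|v v_ann].
    exact: gens_weight_gt0 w_gens.
  apply: (coord_annihilator basis_b (gs := [seq w.2 | w <- gens pi d])).
  - exact: gens_complete.
  - by move=> _ /mapP[w w_gens ->]; apply: gens_in_Vd w_gens.
  - by move=> _ /mapP[w w_gens ->]; apply: (v_ann (w.1, _)); apply: map_f.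
move=> x; rewrite -wsos_gens gram_form big_map /wsos !big_seq.
apply: eq_bigr => w w_gens /=.
by rewrite {1}(Vd_coordK basis_b (gens_in_Vd w_gens)) comb_meval.
Qed.
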